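(* For integers $m,j$ let $U(m,j):=\binom{m-j}{j}2^j$ if $0\le j$ and $2j\le m$, and $U(m,j):=0$ otherwise. For $t\ge0$ let $C_t:=\binom{2t}{t}2^t$ (so $C_t=U(3t,t)$), and for $t\ge1$ let \[D_t:=\sum_{j=0}^{t-1}U(3t,j)-\sum_{j\ge t+1}U(3t,j),\qquad B_t:=\sum_{j=0}^{t-1}U(3t-1,j)-\sum_{j\ge t+1}U(3t-1,j).\] Then for all $t\ge1$: (i) $D_t=C_{t-1}-C_{t-2}+C_{t-3}-\cdots+(-1)^{t-1}C_0$; (ii) $0<D_t<\tfrac12C_t$; (iii) $B_t=\tfrac12C_t-D_t$ and $0<B_t<\tfrac12C_t$; (iv) as formal power series, $\sum_{t\ge1}D_tz^t=\dfrac{z}{(1+z)\sqrt{1-8z}}$. *)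

From mathcomp Require Import all_boot all_order all_algebra.
Set Implicit Arguments. Unset Strict Implicit. Unset Printing Implicit Defensive.
Import Order.TTheory GRing.Theory Num.Theory.
Local Open Scope ring_scope.

(* U(m,j) = binom(m-j, j) 2^j if 0 <= j and 2j <= m, 0 otherwise.
   Only nonnegative j (and m) occur in the statement. *)
Definition U (m j : nat) : rat :=
  if (2 * j <= m)%N then ('C(m - j, j) * 2 ^ j)%N%:R else 0.

Definition Cc (t : nat) : rat := ('C(2 * t, t) * 2 ^ t)%N%:R.

(* D_t; the sum over j >= t+1 is finite since U(m,j)=0 for j > m *)
Definition D (t : nat) : rat :=
  \sum_(0 <= j < t) U (3 * t) j - \sum_(t.+1 <= j < (3 * t).+1) U (3 * t) j.

Definition B (t : nat) : rat :=
  \sum_(0 <= j < t) U (3 * t - 1) j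
  - \sum_(t.+1 <= j < (3 * t - 1).+1) U (3 * t - 1) j.

Definition fps := nat -> rat.
Definition fps_mul (f g : fps) : fps :=
  fun n => \sum_(i < n.+1) f i * g (n - i)%N.
Definition fps_X : fps := fun n => if n == 1%N then 1 else 0.
Definition fps_one_plus_X : fps := fun n => if (n <= 1)%N then 1 else 0.
Definition fps_one_minus_8X : fps :=
  fun n => if n == 0%N then 1 else if n == 1%N then -8 else 0.
Definition is_sqrt_1_minus_8X (S : fps) : Prop :=
  fps_mul S S = fps_one_minus_8X /\ S 0%N = 1.

Definition Dseries : fps := fun t => if t == 0%N then 0 else D t.

From mathcomp Require Import all_boot all_order all_algebra.
From mathcomp Require Import lra ring zify.
From Stdlib Require Import FunctionalExtensionality.
Set Implicit Arguments.
Unset Strict Implicit.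
Unset Printing Implicit Defensive.
Import Order.TTheory GRing.Theory Num.Theory.
Local Open Scope ring_scope.

(* By Pascal's rule U(m+2,j+1) = U(m+1,j+1) + 2 U(m,j), the row sums a_m of U
   satisfy a_m + a_(m+1) = 2^(m+1), and the partial sums below the diagonal obey
   the same rule.  Combining these along the lines m = 3t gives
   D_(t+1) + D_t = C_t, whence (i); (ii) follows by induction from C_(t+1) >= 4 C_t,
   and (iii) from B_t + D_t = C_t / 2, proved in the same way.
   For (iv), D_(t+1) + D_t = C_t says (1+z) sum D_t z^t = z sum C_t z^t, and
   sum C_t z^t = (1-8z)^(-1/2) is the inverse of sqrt(1-8z): both series solve a
   first-order equation (1 - 8z) f' = c f, and their product solves it with c = 0. *)

Lemma UE m j : U m j = 'C(m - j, j)%:R * 2 ^+ j.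
Proof.
rewrite /U; case: ifP => [_|lt_m_2j]; first by rewrite natrM natrX.
by rewrite bin_small ?mul0r //; lia.
Qed.

Lemma U_small m j : (m < j)%N -> U m j = 0.
Proof. by move=> lt_mj; rewrite UE bin_small ?mul0r //; lia. Qed.

Lemma Um0 m : U m 0 = 1.
Proof. by rewrite UE subn0 bin0 mulr1. Qed.

Lemma U_pascal m j : U m.+2 j.+1 = U m.+1 j.+1 + 2 * U m j.
Proof.
rewrite !UE !subSS exprS.
have [le_jm | lt_mj] := leqP j m; first by rewrite subSn // binS natrD; ring.
by rewrite !bin_small ?mulr0 ?mul0r ?addr0 //; lia.
Qed.

Definition Upart m k := \sum_(0 <= j < k) U m j.
Definition Urow m := Upart m m.+1.

Lemma Upart0 m : Upart m 0 = 0.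
Proof. by rewrite /Upart big_geq. Qed.

Lemma UpartS m k : Upart m k.+1 = Upart m k + U m k.
Proof. by rewrite /Upart big_nat_recr. Qed.

Lemma Upart_pascal m k : Upart m.+2 k.+1 = Upart m.+1 k.+1 + 2 * Upart m k.
Proof.
elim: k => [|k IHk]; first by rewrite !UpartS !Upart0 !Um0; ring.
by rewrite UpartS IHk (UpartS m.+1 k.+1) (UpartS m k) U_pascal; ring.
Qed.

Lemma Upart_row m k : (m < k)%N -> Upart m k = Urow m.
Proof.
elim: k => [//|k IHk] lt_mk; have [lt_mk' | le_km] := ltnP m k.
  by rewrite UpartS IHk // U_small // addr0.
by have -> : k = m by lia.
Qed.

Lemma Urow_suffix m k : (k <= m.+1)%N ->
  \sum_(k <= j < m.+1) U m j = Urow m - Upart m k.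
Proof.
move=> le_k_m1.
by rewrite /Urow /Upart (big_cat_nat (leq0n k) le_k_m1) addrAC subrr add0r.
Qed.

Lemma Urow_pascal m : Urow m.+2 = Urow m.+1 + 2 * Urow m.
Proof. by rewrite /Urow Upart_pascal (@Upart_row m.+1 m.+3) // (@Upart_row m m.+2). Qed.

Lemma Urow_addS m : Urow m + Urow m.+1 = 2 ^+ m.+1.
Proof.
elim: m => [|m IHm]; first by rewrite /Urow !UpartS !Upart0 !Um0 UE subnn bin_small //; ring.
by rewrite Urow_pascal exprS -IHm; ring.
Qed.

Lemma bin_odd_sym k : 'C((2 * k).+1, k.+1) = 'C((2 * k).+1, k).
Proof. by rewrite -bin_sub; [congr 'C(_, _); lia | lia]. Qed.

Lemma bin_mid_double k : 'C((2 * k).+2, k.+1) = (2 * 'C((2 * k).+1, k))%N.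
Proof. by rewrite binS bin_odd_sym addnn -mul2n. Qed.

Lemma U_diag t : U (3 * t) t = Cc t.
Proof. by rewrite UE /Cc natrM natrX; have -> : (3 * t - t = 2 * t)%N by lia. Qed.

Lemma Cc_U k : Cc k.+1 = 4 * U (3 * k).+1 k.
Proof.
rewrite /Cc UE natrM natrX.
have -> : ((3 * k).+1 - k = (2 * k).+1)%N by lia.
have -> : (2 * k.+1 = (2 * k).+2)%N by lia.
by rewrite bin_mid_double natrM exprS; ring.
Qed.

Lemma U_subdiag k : U (3 * k).+2 k.+1 = 2 * U (3 * k).+1 k.
Proof.
rewrite !UE exprS.
have -> : ((3 * k).+2 - k.+1 = (2 * k).+1)%N by lia.
have -> : ((3 * k).+1 - k = (2 * k).+1)%N by lia.
by rewrite bin_odd_sym; ring.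
Qed.

Lemma mul3S k : (3 * k.+1 = (3 * k).+3)%N.
Proof. lia. Qed.

Lemma Upart_diag_sums k :
  Upart (3 * k) k + Upart (3 * k).+1 k = 8 ^+ k - U (3 * k).+1 k /\
  Upart (3 * k.+1) k.+1 + Upart (3 * k) k = 3 * 8 ^+ k - Cc k.+1 / 2.
Proof.
rewrite mul3S; elim: k => [|k [IH0 IH1]].
  by rewrite !UpartS !Upart0 !Um0 /Cc expr0 (_ : ('C(2 * 1, 1) * 2 ^ 1 = 4)%N) //; split; lra.
rewrite !mul3S; set m := (3 * k)%N in IH0 IH1 *.
have S1 : Upart m.+3 k.+1 + Upart m.+4 k.+1 = 8 ^+ k.+1 - U m.+4 k.+1.
  have -> : Upart m.+4 k.+1 = 3 * Upart m.+3 k.+1 - 2 * U m.+2 k - 4 * Upart m.+1 k.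
    by rewrite (Upart_pascal m.+2 k) (Upart_pascal m.+1 k) UpartS; ring.
  rewrite (U_pascal m.+2 k) /m -mul3S U_diag mul3S -/m exprS.
  have := Cc_U k; lra.
split=> //.
have -> : Upart m.+2.+4 k.+2
    = 3 * Upart m.+4 k.+1 + 2 * Upart m.+3 k.+1 - 2 * U m.+3 k + U m.+1.+4 k.+1.
  rewrite (Upart_pascal m.+4 k.+1) (UpartS m.+1.+4 k.+1).
  by rewrite (Upart_pascal m.+3 k) (UpartS m.+3 k); ring.
have := Cc_U k.+1; rewrite mul3S -/m (U_pascal m.+3 k) exprS in S1 *; lra.
Qed.

Lemma exp2_mul3 t : 2 ^+ (3 * t) = 8 ^+ t :> rat.
Proof. by rewrite exprM. Qed.

Lemma D_Upart t : D t = 2 * Upart (3 * t) t + Cc t - Urow (3 * t).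
Proof.
rewrite /D Urow_suffix; last lia.
by rewrite UpartS -/(Upart (3 * t) t) U_diag; ring.
Qed.

Lemma D0 : D 0 = 0.
Proof. by rewrite /D !big_geq // subrr. Qed.

Lemma D_addS t : D t.+1 + D t = Cc t.
Proof.
have [_ sum_diag] := Upart_diag_sums t.
have row0 := Urow_addS (3 * t); have row1 := Urow_addS (3 * t).+1.
have row2 := Urow_addS (3 * t).+2.
rewrite !exprS exp2_mul3 in row0 row1 row2.
rewrite !D_Upart mul3S; rewrite mul3S in sum_diag; lra.
Qed.

Lemma D_alt t : D t = \sum_(i < t) (-1) ^+ (t - 1 - i)%N * Cc i.
Proof.
elim: t => [|t IHt]; first by rewrite D0 big_ord0.
have -> : D t.+1 = Cc t - D t by have := D_addS t; lra.
rewrite IHt big_ord_recr /= subSS subn0 subnn expr0 mul1r addrC -sumrN.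
congr (_ + _); apply: eq_bigr => i _.
have -> : (t - i = (t - 1 - i).+1)%N by have := ltn_ord i; lia.
by rewrite exprS mulN1r mulNr.
Qed.

Lemma B_add_D t : B t.+1 + D t.+1 = Cc t.+1 / 2.
Proof.
rewrite /B (_ : (3 * t.+1 - 1 = (3 * t).+2)%N); last lia.
rewrite Urow_suffix; last lia.
rewrite UpartS -/(Upart (3 * t).+2 t.+1) D_Upart mul3S.
have [sum_diag _] := Upart_diag_sums t.
have row := Urow_addS (3 * t).+2.
rewrite !exprS exp2_mul3 in row.
have := Upart_pascal (3 * t).+1 t; have := Upart_pascal (3 * t) t.
have := UpartS (3 * t).+1 t; have := Cc_U t; have := U_subdiag t; lra.
Qed.

(* The coefficientwise form of (1 - al z) f' = be f, solved by (1 - al z)^(-be/al). *)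
Definition hyperg (al be : rat) (f : fps) :=
  forall i, i.+1%:R * f i.+1 = (al * i%:R + be) * f i.

Lemma Cc_hyperg : hyperg 8 4 Cc.
Proof.
move=> i.
have natE : (i.+1 * ('C(2 * i.+1, i.+1) * 2 ^ i.+1)
             = (8 * i + 4) * ('C(2 * i, i) * 2 ^ i))%N.
  have -> : (2 * i.+1 = (2 * i).+2)%N by lia.
  have := mul_bin_diag (2 * i).+1 i; rewrite /= bin_odd_sym bin_mid_double expnS; nia.
by rewrite /Cc -natrM natE natrM natrD natrM.
Qed.

Lemma Cc_gt0 t : 0 < Cc t.
Proof. by rewrite /Cc ltr0n muln_gt0 bin_gt0 expn_gt0; apply/andP; split; lia. Qed.

Lemma Cc_ge4 t : 4 * Cc t <= Cc t.+1.
Proof.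
have := Cc_hyperg t; have := Cc_gt0 t; have : 0 <= t%:R :> rat by [].
nra.
Qed.

Lemma D_bounds t : 0 < D t.+1 <= Cc t.
Proof.
elim: t => [|t /andP[D_gt0 D_le]]; apply/andP.
  by have := D_addS 0; rewrite D0 addr0 => ->; split; [exact: Cc_gt0|].
have := D_addS t.+1; have := Cc_ge4 t; have := Cc_gt0 t; split; lra.
Qed.

Lemma fps_mul0 (f g : fps) : fps_mul f g 0 = f 0%N * g 0%N.
Proof. by rewrite /fps_mul big_ord1. Qed.

Lemma fps_mul_shiftl (f g : fps) n : f 0%N = 0 ->
  fps_mul f g n.+1 = fps_mul (fun i => f i.+1) g n.
Proof. by move=> f0; rewrite /fps_mul big_ord_recl f0 mul0r add0r. Qed.

Lemma hyperg_mul al be ga (f g : fps) :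
  hyperg al be f -> hyperg al ga g -> hyperg al (be + ga) (fps_mul f g).
Proof.
move=> hf hg n; rewrite /fps_mul mulr_sumr.
transitivity (\sum_(i < n.+2) (i%:R * f i * g (n.+1 - i)%N
                               + f i * ((n.+1 - i)%N%:R * g (n.+1 - i)%N))).
  apply: eq_bigr => i _; have lt_i_n2 := ltn_ord i.
  by rewrite -{1}(subnKC (_ : (i <= n.+1)%N)) // natrD; ring.
rewrite big_split /= [X in X + _]big_ord_recl [X in _ + X]big_ord_recr /=.
rewrite subnn !mul0r mulr0 add0r addr0 addrA.
rewrite -big_split mulr_sumr; apply: eq_bigr => i _; have lt_i_n1 := ltn_ord i.
rewrite /bump leq0n add1n subSS subSn // hf hg natrB // /=; ring.
Qed.

Lemma hyperg_vanish al be (f : fps) k : hyperg al be f -> al * k%:R + be = 0 ->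
  forall n, (k < n)%N -> f n = 0.
Proof.
move=> hf root_k; elim=> [//|n IHn] lt_k_n1.
have : n.+1%:R * f n.+1 = 0.
  rewrite hf; have [<- | ne_kn] := eqVneq k n; first by rewrite root_k mul0r.
  by rewrite IHn ?mulr0 //; rewrite ltn_neqAle ne_kn -ltnS.
by move/eqP; rewrite mulf_eq0 pnatr_eq0 => /eqP.
Qed.

Fixpoint sqrt_1m8X (n : nat) : rat :=
  if n is n'.+1 then (8 * n'%:R - 4) / n%:R * sqrt_1m8X n' else 1.

Lemma sqrt_1m8X_hyperg : hyperg 8 (-4) sqrt_1m8X.
Proof. by move=> i /=; rewrite mulrA mulrCA divff ?pnatr_eq0 // mulr1. Qed.

Lemma sqrt_1m8X_spec : is_sqrt_1_minus_8X sqrt_1m8X.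
Proof.
split=> //; have sq_hyperg := hyperg_mul sqrt_1m8X_hyperg sqrt_1m8X_hyperg.
have sq0 : fps_mul sqrt_1m8X sqrt_1m8X 0 = 1 by rewrite fps_mul0 mulr1.
have sq1 : fps_mul sqrt_1m8X sqrt_1m8X 1 = -8 by have := sq_hyperg 0%N; rewrite sq0; lra.
apply: functional_extensionality => -[|[|n]] //=.
by apply: (hyperg_vanish sq_hyperg (k := 1%N)) => //; lra.
Qed.

Lemma fps_mul_self_S (S : fps) n :
  fps_mul S S n.+1 = 2 * S 0%N * S n.+1 + \sum_(i < n) S i.+1 * S (n - i)%N.
Proof. by rewrite /fps_mul big_ord_recl big_ord_recr /= subn0 subnn; ring. Qed.

Lemma fps_sqrt_uniq (S T : fps) :
  fps_mul S S = fps_mul T T -> S 0%N = T 0%N -> S 0%N != 0 -> S = T.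
Proof.
move=> eq_sq eq0 nz0; apply: functional_extensionality => n.
elim: n {-2}n (leqnn n) => [|n IHn] i le_in; first by have -> : i = 0%N by lia.
have [/IHn // | lt_ni] := leqP i n; have -> : i = n.+1 by lia.
have sum_eq : \sum_(j < n) T j.+1 * T (n - j)%N = \sum_(j < n) S j.+1 * S (n - j)%N.
  apply: eq_bigr => j _; have lt_jn := ltn_ord j.
  by rewrite (IHn j.+1) ?(IHn (n - j)%N) // leq_subr.
have := congr1 (fun F => F n.+1) eq_sq; rewrite /= !fps_mul_self_S -eq0 sum_eq.
move/eqP; rewrite -subr_eq0 (_ : _ - _ = 2 * S 0%N * (S n.+1 - T n.+1)); last by ring.
by rewrite !mulf_eq0 subr_eq0 (negbTE nz0) orbF => /orP[|/eqP] //; rewrite pnatr_eq0.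
Qed.

Lemma Cc_mul_sqrt_1m8X n : fps_mul Cc sqrt_1m8X n = (n == 0%N)%:R.
Proof.
have prod_hyperg := hyperg_mul Cc_hyperg sqrt_1m8X_hyperg.
case: n => [|n]; first by rewrite fps_mul0 /Cc mulr1.
by apply: (hyperg_vanish prod_hyperg (k := 0%N)) => //; lra.
Qed.

Lemma Dseries_D n : Dseries n = D n.
Proof. by rewrite /Dseries; case: eqP => [->|]; rewrite ?D0. Qed.

Lemma Dseries_mul_1X n : fps_mul Dseries fps_one_plus_X n.+1 = Cc n.
Proof.
rewrite /fps_mul !big_ord_recr big1 => [|i _] /=; last first.
  by rewrite /fps_one_plus_X ifF ?mulr0 //; have := ltn_ord i; lia.
rewrite subnn subSn // subnn /fps_one_plus_X !Dseries_D /= !mulr1 add0r.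
by rewrite addrC D_addS.
Qed.

Theorem mainTheorem10 :
  (forall t : nat, (1 <= t)%N ->
     D t = \sum_(i < t) (-1) ^+ (t - 1 - i)%N * Cc i
     /\ (0 < D t /\ D t < Cc t / 2)
     /\ (B t = Cc t / 2 - D t /\ 0 < B t /\ B t < Cc t / 2))
  /\ (exists S : fps, is_sqrt_1_minus_8X S)
  /\ (forall S : fps, is_sqrt_1_minus_8X S ->
        fps_mul (fps_mul Dseries fps_one_plus_X) S = fps_X).
Proof.
split.
  case=> [//|t] _; have /andP[D_gt0 D_le] := D_bounds t.
  have := Cc_ge4 t; have := Cc_gt0 t; have := B_add_D t.
  split; first exact: D_alt.
  by split; [split | split; [|split]]; lra.
split; first by exists sqrt_1m8X; exact: sqrt_1m8X_spec.
move=> S [sqS S0].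
have -> : S = sqrt_1m8X.
  by apply: fps_sqrt_uniq; rewrite ?S0 // sqS; case: sqrt_1m8X_spec.
apply: functional_extensionality => -[|n].
  by rewrite !fps_mul0 Dseries_D D0 !mul0r.
rewrite fps_mul_shiftl; last by rewrite fps_mul0 Dseries_D D0 mul0r.
rewrite (_ : (fun i => _) = Cc); last exact: functional_extensionality Dseries_mul_1X.
by rewrite Cc_mul_sqrt_1m8X /fps_X; case: n.
Qed.
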